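(* Let $\operatorname{R}_4=\{a_0,a_1,a_2,a_3\}$ be the dihedral quandle of order $4$, with $a_ia_j=a_{2j-i \pmod 4}$. Then $\operatorname{Aut}(\mathbb{Z}[\operatorname{R}_4])\cong(\mathbb{Z}_2\times\mathbb{Z}_2)\rtimes\mathbb{Z}_2$.
   Context: For a quandle $Q$, the quandle ring $\mathbb{Z}[Q]$ is the free abelian group with basis $Q$, with multiplication $\big(\sum_i\alpha_i q_i\big)\big(\sum_j\beta_j q_j\big)=\sum_{i,j}\alpha_i\beta_j (q_iq_j)$. $\operatorname{Aut}(\mathbb{Z}[Q])$ denotes the group of ring automorphisms of $\mathbb{Z}[Q]$ (bijective additive maps preserving the multiplication). *)

From HB Require Import structures.
From mathcomp Require Import all_boot all_order all_algebra all_fingroup all_solvable.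
Set Implicit Arguments. Unset Strict Implicit. Unset Printing Implicit Defensive.
Import GRing.Theory.
Local Open Scope ring_scope.

(* The dihedral quandle R_4 on {a_0,a_1,a_2,a_3} ~ 'I_4 : a_i a_j = a_(2j - i mod 4). *)
Definition r4op (i j : 'I_4) : 'I_4 := inZp (2 * j + 3 * i)%N.

Definition ZR4 := {ffun 'I_4 -> int}.

Definition basis4 (i : 'I_4) : ZR4 := [ffun k => (k == i)%:R].

Definition qmul (x y : ZR4) : ZR4 :=
  [ffun k => \sum_(i < 4) \sum_(j < 4) if r4op i j == k then x i * y j else 0].

Definition is_ring_aut (f : ZR4 -> ZR4) : Prop :=
  [/\ {morph f : x y / x + y}, bijective f & {morph f : x y / qmul x y}].

Definition AutZR4 := {f : ZR4 -> ZR4 | is_ring_aut f}.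

From HB Require Import structures.
From mathcomp Require Import all_boot all_order all_algebra all_fingroup all_solvable.
From mathcomp Require Import ring zify.
From Stdlib Require Import ProofIrrelevance FunctionalExtensionality.
Set Implicit Arguments. Unset Strict Implicit. Unset Printing Implicit Defensive.
Import GRing.Theory.

(* In Z[R_4] one has x y = (y_0 + y_2) x' + (y_1 + y_3) x'', where x' and x''
   are x with the coordinates of a_1, a_3 (resp. a_0, a_2) exchanged.  So the
   augmentation is multiplicative and the augmentations of the f a_i, for an
   automorphism f, are idempotent integers; as a_j = (a_j a_i) a_i, one of them
   vanishing would kill all of them, against surjectivity.  Hence f maps each
   a_i to an idempotent of augmentation 1, and these are the elements
   a * a_p + (1 - a) * a_(p+2) with p in {0, 1} and a an integer.  The
   relations a_0 a_1 = a_2 and a_1 a_0 = a_3, with injectivity, put f a_0 and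
   f a_1 in different blocks {a_0, a_2}, {a_1, a_3} and determine f a_2 and
   f a_3.  Then f multiplies the difference of the two coordinates of a block
   by 2a - 1, which must be a unit by surjectivity, so a is 0 or 1 and f
   permutes the basis.  Thus Aut(Z[R_4]) is the group of the 8 permutations
   preserving the two blocks, which is (Z_2 x Z_2) ><| Z_2. *)

Local Open Scope ring_scope.

Notation A0 := (@Ordinal 4 0 isT).
Notation A1 := (@Ordinal 4 1 isT).
Notation A2 := (@Ordinal 4 2 isT).
Notation A3 := (@Ordinal 4 3 isT).

Lemma ord4_cases (P : 'I_4 -> Prop) : P A0 -> P A1 -> P A2 -> P A3 -> forall k, P k.
Proof. by move=> ? ? ? ? [[|[|[|[|k]]]] Hk] //; rewrite (bool_irrelevance Hk isT). Qed.

Lemma big4 (V : nmodType) (F : 'I_4 -> V) : \sum_(i < 4) F i = F A0 + F A1 + F A2 + F A3.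
Proof.
rewrite !big_ord_recl big_ord0 addr0 !addrA.
by do !congr (_ + _); congr (F _); apply: val_inj.
Qed.

Lemma r4opxx i : r4op i i = i.
Proof. by apply/eqP; elim/ord4_cases: i. Qed.

Lemma r4opK k : involutive (r4op ^~ k).
Proof. by move=> i; apply/eqP; elim/ord4_cases: i; elim/ord4_cases: k. Qed.

Lemma qmulE x y k : qmul x y k = \sum_j y j * x (r4op k j).
Proof.
rewrite ffunE exchange_big; apply: eq_bigr => j _.
rewrite (bigD1 (r4op k j)) //= r4opK eqxx mulrC big1 ?addr0 // => i /negPf.
by rewrite -(can2_eq (r4opK j) (r4opK j)) => ->.
Qed.

Lemma basis4_mul i j : qmul (basis4 i) (basis4 j) = basis4 (r4op i j).
Proof.
apply/ffunP => k; rewrite qmulE (bigD1 j) //= big1 => [|l /negPf]; rewrite !ffunE.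
  by rewrite eqxx mul1r addr0 (can2_eq (r4opK j) (r4opK j)).
by move=> ->; rewrite mul0r.
Qed.

Lemma basis4_inj : injective basis4.
Proof.
move=> i j /(congr1 (fun w : ZR4 => w i)); rewrite !ffunE eqxx.
by case: eqP.
Qed.

Lemma basis4_expand (z : ZR4) : z = \sum_i basis4 i *~ z i.
Proof.
apply/ffunP => k; rewrite sum_ffunE; under eq_bigr do rewrite ffunMzE ffunE.
rewrite (bigD1 k) //= eqxx mulrzz mul1r big1 ?addr0 // => i /negPf.
by rewrite eq_sym => ->; rewrite mul0rz.
Qed.

Definition vec4 (a b c d : int) : ZR4 :=
  [ffun k : 'I_4 => match val k with 0 => a | 1 => b | 2 => c | _ => d end].

Lemma vec4E (v : ZR4) : v = vec4 (v A0) (v A1) (v A2) (v A3).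
Proof. by apply/ffunP; elim/ord4_cases; rewrite ffunE. Qed.

Lemma vec4_inj a b c d a' b' c' d' :
  vec4 a b c d = vec4 a' b' c' d' -> [/\ a = a', b = b', c = c' & d = d'].
Proof.
move=> E; have coord k : vec4 a b c d k = vec4 a' b' c' d' k by rewrite E.
by move: (coord A0) (coord A1) (coord A2) (coord A3); rewrite !ffunE.
Qed.

Lemma qmul_vec4 a b c d a' b' c' d' :
  qmul (vec4 a b c d) (vec4 a' b' c' d') =
  vec4 ((a' + c') * a + (b' + d') * c) ((a' + c') * d + (b' + d') * b)
       ((a' + c') * c + (b' + d') * a) ((a' + c') * b + (b' + d') * d).
Proof. by apply/ffunP; elim/ord4_cases; rewrite qmulE big4 !ffunE /=; ring. Qed.

Definition aug (v : ZR4) : int := \sum_k v k.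

Lemma aug_is_zmod_morphism : zmod_morphism aug.
Proof. by move=> u v; rewrite /aug -sumrB; apply: eq_bigr => k _; rewrite !ffunE. Qed.

HB.instance Definition _ := GRing.isZmodMorphism.Build ZR4 int aug aug_is_zmod_morphism.

Lemma aug_basis i : aug (basis4 i) = 1.
Proof.
rewrite /aug (bigD1 i) //= big1 => [|k /negPf]; rewrite ffunE ?eqxx ?addr0 //.
by move=> ->.
Qed.

Lemma aug_qmul u v : aug (qmul u v) = aug u * aug v.
Proof.
rewrite /aug; under eq_bigr do rewrite qmulE.
rewrite exchange_big mulrC mulr_suml; apply: eq_bigr => j _.
by rewrite -mulr_sumr [in RHS](reindex_inj (can_inj (r4opK j))).
Qed.

Definition idem (h : bool) (a : int) : ZR4 :=
  if h then vec4 0 a 0 (1 - a) else vec4 a 0 (1 - a) 0.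

Lemma idem_shape v : aug v = 1 -> qmul v v = v -> exists h a, v = idem h a.
Proof.
rewrite (vec4E v) /aug big4 !ffunE /= qmul_vec4.
move: (v A0) (v A1) (v A2) (v A3) => a b c d sum1 /vec4_inj [ea eb ec ed].
have : (b + d) * (a - c) = 0 by lia.
have : (a + c) * (b - d) = 0 by lia.
move=> /eqP; rewrite mulf_eq0 subr_eq0 => /orP[/eqP ac0 | /eqP bd];
move=> /eqP; rewrite mulf_eq0 subr_eq0 => /orP[/eqP bd0 | /eqP ac].
- lia.
- by exists true, b; congr vec4; lia.
- by exists false, a; congr vec4; lia.
- lia.
Qed.

Lemma qmul_idem h h' a c :
  qmul (idem h a) (idem h' c) = idem h (if h == h' then a else 1 - a).
Proof. by case: h; case: h' => /=; rewrite qmul_vec4; congr vec4; ring. Qed.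

Definition block_diff (h : bool) (v : ZR4) : int :=
  if h then v A1 - v A3 else v A0 - v A2.

Lemma block_diff_is_zmod_morphism h : zmod_morphism (block_diff h).
Proof. by case: h => u v; rewrite /block_diff !ffunE; ring. Qed.

HB.instance Definition _ h :=
  GRing.isZmodMorphism.Build ZR4 int (block_diff h) (block_diff_is_zmod_morphism h).

Lemma block_diff_idem h h' a :
  block_diff h (idem h' a) = if h == h' then 2 * a - 1 else 0.
Proof. by case: h; case: h' => /=; rewrite /block_diff !ffunE /=; ring. Qed.

Lemma unit_2m1 (a : int) : 2 * a - 1 \is a GRing.unit -> a = 0 \/ a = 1.
Proof. by rewrite qualifE => /orP[]/eqP; lia. Qed.

Definition D4 := (bool * bool * bool)%type.
HB.instance Definition _ := Finite.on D4.

Definition dmul (g g' : D4) : D4 :=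
  let: (x, y, h) := g in let: (x', y', h') := g' in
  (x' (+) (if h' then y else x), y' (+) (if h' then x else y), h (+) h').

Definition dinv (g : D4) : D4 := let: (x, y, h) := g in if h then (y, x, h) else g.

Lemma dmulA : associative dmul.
Proof. by move=> [[[] []] []] [[[] []] []] [[[] []] []]. Qed.

Lemma dmul1 : left_id (false, false, false) dmul.
Proof. by move=> [[[] []] []]. Qed.

Lemma dmulV : left_inverse (false, false, false) dinv dmul.
Proof. by move=> [[[] []] []]. Qed.

HB.instance Definition _ := Finite_isGroup.Build D4 dmulA dmul1 dmulV.

(* (x, y, h) acts on the index 2 q + p of a_(2q+p) by p |-> p + h and
   q |-> q + (if p then y else x): x and y flip the blocks {a_0, a_2} and
   {a_1, a_3}, h exchanges them. *)
Definition piD (g : D4) (i : 'I_4) : 'I_4 :=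
  let: (x, y, h) := g in
  inZp (2 * (odd i./2 (+) (if odd i then y else x)) + (odd i (+) h)).

Lemma piD1 i : piD 1%g i = i.
Proof. by apply/eqP; elim/ord4_cases: i. Qed.

Lemma piDM g g' i : piD (g * g')%g i = piD g (piD g' i).
Proof. by apply/eqP; move: g g'; elim/ord4_cases: i => - [[[] []] []] [[[] []] []]. Qed.

Lemma piDK g : cancel (piD g) (piD g^-1%g).
Proof. by move=> i; rewrite -piDM mulVg piD1. Qed.

Lemma piDVK g : cancel (piD g^-1%g) (piD g).
Proof. by move=> i; rewrite -piDM mulgV piD1. Qed.

Lemma piD_r4op g : {morph piD g : i j / r4op i j}.
Proof.
by move=> i j; apply/eqP; move: g; elim/ord4_cases: i; elim/ord4_cases: j => - [[[] []] []].
Qed.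

Lemma piD_inj g g' : piD g =1 piD g' -> g = g'.
Proof.
move=> E; apply/eqP; move: (E A0) (E A1) => /eqP + /eqP.
by move: g g' {E} => [[[] []] []] [[[] []] []].
Qed.

Definition aut_of (g : D4) (z : ZR4) : ZR4 := [ffun k => z (piD g^-1%g k)].

Lemma aut_of_basis g i : aut_of g (basis4 i) = basis4 (piD g i).
Proof. by apply/ffunP => k; rewrite !ffunE (can2_eq (piDVK g) (piDK g)). Qed.

Lemma aut_ofK g : cancel (aut_of g) (aut_of g^-1%g).
Proof. by move=> z; apply/ffunP => k; rewrite !ffunE invgK piDK. Qed.

Lemma aut_of_mul g : {morph aut_of g : x y / qmul x y}.
Proof.
move=> x y; apply/ffunP => k; rewrite ffunE !qmulE.
rewrite (reindex_inj (can_inj (piDVK g))); apply: eq_bigr => j _.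
by rewrite !ffunE piD_r4op.
Qed.

Lemma aut_of_is_aut g : is_ring_aut (aut_of g).
Proof.
split; last exact: aut_of_mul.
- by move=> x y; apply/ffunP => k; rewrite !ffunE.
- exists (aut_of g^-1%g); first exact: aut_ofK.
  by move=> z; rewrite -{1}[g]invgK aut_ofK.
Qed.

Section Additive.

Variable f : ZR4 -> ZR4.
Hypothesis fA : {morph f : x y / x + y}.

Lemma additive_zmod_morphism : zmod_morphism f.
Proof. by move=> x y; rewrite -[in RHS](subrK y x) [in RHS]fA addrK. Qed.

HB.instance Definition _ := GRing.isZmodMorphism.Build ZR4 ZR4 f additive_zmod_morphism.

Lemma additive_expand z : f z = \sum_i f (basis4 i) *~ z i.
Proof. by rewrite {1}(basis4_expand z) raddf_sum; under eq_bigr do rewrite raddfMz. Qed.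

End Additive.

Section RingAut.

Variable f : ZR4 -> ZR4.
Hypotheses (fA : {morph f : x y / x + y}) (f_bij : bijective f)
  (fM : {morph f : x y / qmul x y}).

Local Notation e i := (f (basis4 i)).

Lemma aut_basis_mul i j : e (r4op i j) = qmul (e i) (e j).
Proof. by rewrite -fM basis4_mul. Qed.

Lemma aut_basis_inj : injective (fun i => e i).
Proof. exact: inj_comp (bij_inj f_bij) basis4_inj. Qed.

Lemma aug_aut_basis i : aug (e i) = 1.
Proof.
have augM j k : aug (e (r4op j k)) = aug (e j) * aug (e k).
  by rewrite aut_basis_mul aug_qmul.
have aug_neq0 : aug (e i) != 0.
  apply/eqP => aug0; have [finv _ fK] := f_bij.
  have aug0_all j : aug (e j) = 0 by rewrite -(r4opK i j) augM aug0 mulr0.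
  have := congr1 aug (fK (basis4 A0)).
  rewrite aug_basis additive_expand // raddf_sum big1 // => j _.
  by rewrite raddfMz /= aug0_all mul0rz.
by apply/esym/(mulIf aug_neq0); rewrite mul1r -augM r4opxx.
Qed.

Lemma aut_basis_idem i : exists h a, e i = idem h a.
Proof. by apply: idem_shape; rewrite ?aug_aut_basis // -aut_basis_mul r4opxx. Qed.

Lemma aut_basis_blocks : exists h a b,
  [/\ e A0 = idem h a, e A1 = idem (~~ h) b,
      e A2 = idem h (1 - a) & e A3 = idem (~~ h) (1 - b)].
Proof.
have [h [a e0]] := aut_basis_idem A0; have [h' [b e1]] := aut_basis_idem A1.
have e2 : e A2 = qmul (e A0) (e A1).
  by rewrite -aut_basis_mul; congr (f (basis4 _)); apply/eqP.
have e3 : e A3 = qmul (e A1) (e A0).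
  by rewrite -aut_basis_mul; congr (f (basis4 _)); apply/eqP.
rewrite e0 e1 !qmul_idem in e2 e3.
have [h'_eq | /negPf h'_neq] := eqVneq h' h.
  by move: e2; rewrite h'_eq eqxx -e0 => /aut_basis_inj.
rewrite eq_sym h'_neq in e2; rewrite h'_neq in e3.
have h'_neg : h' = ~~ h by move/negbT: h'_neq; case: (h); case: (h').
by exists h, a, b; rewrite e1 e3 h'_neg.
Qed.

Lemma aut_blocks_coef01 h a b :
  e A0 = idem h a -> e A1 = idem (~~ h) b ->
  e A2 = idem h (1 - a) -> e A3 = idem (~~ h) (1 - b) ->
  (a = 0 \/ a = 1) /\ (b = 0 \/ b = 1).
Proof.
move=> e0 e1 e2 e3.
have f_surj v : exists z, f z = v by have [finv _ fK] := f_bij; exists (finv v).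
have diff_f k z : block_diff k (f z) = \sum_i block_diff k (e i) * z i.
  rewrite additive_expand // raddf_sum.
  by apply: eq_bigr => i _; rewrite raddfMz mulrzz.
have [hNh Nhh] : (h == ~~ h) = false /\ (~~ h == h) = false by case: (h).
split; apply: unit_2m1; apply/unitrPr.
- have [z fz] := f_surj (idem h 1); exists (z A0 - z A2).
  move: (diff_f h z); rewrite fz big4 e0 e1 e2 e3 !block_diff_idem eqxx hNh.
  lia.
- have [z fz] := f_surj (idem (~~ h) 1); exists (z A1 - z A3).
  move: (diff_f (~~ h) z); rewrite fz big4 e0 e1 e2 e3 !block_diff_idem eqxx Nhh.
  lia.
Qed.

Lemma aut_basis_perm : exists g, forall i, e i = basis4 (piD g i).
Proof.
have [h [a [b [e0 e1 e2 e3]]]] := aut_basis_blocks.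
have [a01 b01] := aut_blocks_coef01 e0 e1 e2 e3.
exists (a == 0, b == 0, h); elim/ord4_cases; rewrite ?e0 ?e1 ?e2 ?e3 /idem;
by case: a01 b01 => -> [] ->; case: (h); apply/ffunP; elim/ord4_cases; rewrite !ffunE.
Qed.

End RingAut.

Definition aut_perm (f : AutZR4) : D4 :=
  odflt 1%g [pick g | [forall i, sval f (basis4 i) == basis4 (piD g i)]].

Lemma aut_permP (f : AutZR4) i : sval f (basis4 i) = basis4 (piD (aut_perm f) i).
Proof.
have [fA f_bij fM] := svalP f.
rewrite /aut_perm; case: pickP => [g /forallP/(_ i)/eqP // | no_g].
have [g Eg] := aut_basis_perm fA f_bij fM.
by move: (no_g g) => /forallP[] i'; apply/eqP.
Qed.

Lemma aut_perm_eq (f : AutZR4) g :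
  (forall i, sval f (basis4 i) = basis4 (piD g i)) -> aut_perm f = g.
Proof. by move=> Ef; apply: piD_inj => i; apply: basis4_inj; rewrite -Ef aut_permP. Qed.

Lemma aut_perm_inj : injective aut_perm.
Proof.
have aut_ofE (f : AutZR4) : sval f = aut_of (aut_perm f).
  have [[fA _ _] [gA _ _]] := (svalP f, aut_of_is_aut (aut_perm f)).
  apply: functional_extensionality => z.
  rewrite (additive_expand fA) (additive_expand gA).
  by apply: eq_bigr => i _; rewrite aut_permP aut_of_basis.
move=> f f' E; have sval_eq : sval f = sval f' by rewrite !aut_ofE E.
move: f f' sval_eq {E} => [f f_aut] [f' f'_aut] /= f_f'.
by subst f'; congr exist; apply: proof_irrelevance.
Qed.

Lemma aut_permM (f g h : AutZR4) :
  (forall x, sval h x = sval f (sval g x)) -> aut_perm h = (aut_perm f * aut_perm g)%g.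
Proof. by move=> Eh; apply: aut_perm_eq => i; rewrite Eh !aut_permP piDM. Qed.

Local Open Scope group_scope.

Definition flips : {set D4} := setX [set: bool * bool] [set false].
Definition swaps : {set D4} := setX [set (false, false)] [set: bool].

Lemma flips_group_set : group_set flips.
Proof.
apply/group_setP; split; first by rewrite !inE.
by move=> [[x y] h] [[x' y'] h']; rewrite !inE /= => /eqP-> /eqP->.
Qed.

Lemma swaps_group_set : group_set swaps.
Proof.
apply/group_setP; split; first by rewrite !inE.
move=> [[x y] h] [[x' y'] h']; rewrite !inE !andbT => /eqP[-> ->] /eqP[-> ->].
by case: h; case: h'.
Qed.

Canonical flipsG := Group flips_group_set.
Canonical swapsG := Group swaps_group_set.

Lemma D4_sdprod : flips ><| swaps = [set: D4].
Proof.
rewrite sdprodE.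
- apply/setP => -[[x y] h]; rewrite inE; apply/mulsgP.
  exists (if h then (y, x, false) else (x, y, false)) (false, false, h);
    by case: x; case: y; case: h; rewrite ?inE.
- apply/subsetP => -[[x y] h]; rewrite !inE /= andbT => /eqP[-> ->].
  by apply/subsetP => -[[x' y'] h']; rewrite mem_conjg !inE; case: h; case: h'.
- by apply/setP => -[[x y] h]; rewrite !inE; case: x; case: y; case: h.
Qed.

Lemma flips_isog : flips \isog [set: 'Z_2 * 'Z_2].
Proof.
have flips_abelem : 2.-abelem flips.
  apply/exponent2_abelem/exponentP => -[[x y] h]; rewrite !inE /= => /eqP->.
  by case: x; case: y.
have Z22_abelem : 2.-abelem [set: 'Z_2 * 'Z_2].
  apply/exponent2_abelem/exponentP => -[[[|[|?]] ?] [[|[|?]] ?]] _ //; exact/eqP.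
rewrite (isog_abelem_card _ flips_abelem) Z22_abelem.
by rewrite cardsT card_prod !card_ord cardsX cardsT card_prod card_bool cards1.
Qed.

Lemma swaps_isog : swaps \isog [set: 'Z_2].
Proof.
have card_swaps : #|swaps| = 2%N by rewrite cardsX cards1 cardsT card_bool.
have card_Z2 : #|[set: 'Z_2]| = 2%N by rewrite cardsT card_ord.
rewrite (isog_abelem_card _ (prime_abelem _ card_swaps)) //.
by rewrite (prime_abelem _ card_Z2) // card_Z2 card_swaps.
Qed.

Lemma swaps_not_centralize_flips : ~~ (swaps \subset 'C(flips)).
Proof.
apply/negP => /subsetP /(_ (false, false, true)).
by rewrite !inE => /(_ isT) /centP /(_ (true, false, false)); rewrite !inE => /(_ isT).
Qed.

Theorem theorem6p4 :
  exists (gT : finGroupType) (G N H : {group gT}) (phi : AutZR4 -> gT),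
    [/\ N ><| H = G,
        N \isog [set: 'Z_2 * 'Z_2],
        H \isog [set: 'Z_2],
        ~~ (H \subset 'C(N)) &
        [/\ forall f, phi f \in G,
            injective phi,
            forall g, g \in G -> exists f, phi f = g &
            forall f g h : AutZR4,
              (forall x, sval h x = sval f (sval g x)) -> phi h = phi f * phi g]].
Proof.
exists D4, [set: D4]%G, flipsG, swapsG, aut_perm.
split; [exact: D4_sdprod | exact: flips_isog | exact: swaps_isog
       | exact: swaps_not_centralize_flips |].
split; [by move=> f; rewrite inE | exact: aut_perm_inj | | exact: aut_permM].
move=> g _; exists (exist _ (aut_of g) (aut_of_is_aut g)).
by apply: aut_perm_eq => i; apply: aut_of_basis.
Qed.
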